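(* In a finite $(3+1)$-free poset $P$, every top of a tangle is matched to exactly one bottom of a tangle, and every bottom of a tangle is matched to exactly one top of a tangle. That is, the matching relation is a perfect matching between the tops of tangles and the bottoms of tangles of $P$.
   Context: A poset $P$ is $(3+1)$-free if there are no $a,b,c,d\in P$ with $a<b<c$ and $d$ incomparable to each of $a,b,c$. For $a\in P$ let $D_a=\{x\in P:x<a\}$, $U_a=\{x\in P:x>a\}$. Write $a\mathrel{\top}b$ if neither of $D_a,D_b$ contains the other, and $a\mathrel{\bot}b$ if neither of $U_a,U_b$ contains the other. A top of a tangle is a subset $A\subseteq P$ with $|A|\ge 2$ which is a connected component of the graph on vertex set $P$ whose edges are the pairs $\{a,b\}$ with $a\mathrel{\top}b$; a bottom of a tangle is a subset $B\subseteq P$ with $|B|\ge2$ which is a connected component of the analogous graph for $\bot$. A top of a tangle $A$ and a bottom of a tangle $B$ are matched if there exist distinct $a_1,a_2\in A$ and $b_1,b_2\in B$ with $b_1<a_1$, $b_2<a_2$, and each of the pairs $\{a_1,a_2\},\{b_1,b_2\},\{b_1,a_2\},\{b_2,a_1\}$ incomparable (an induced $(2+2)$ subposet with top vertices in $A$ and bottom vertices in $B$). *)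

From mathcomp Require Import all_boot.
Set Implicit Arguments. Unset Strict Implicit. Unset Printing Implicit Defensive.

Section Poset.
Variables (T : finType) (lt : rel T).

Definition is_strict_order : Prop :=
  (forall x, ~~ lt x x) /\ (forall x y z, lt x y -> lt y z -> lt x z).

Definition incomp (x y : T) : bool := ~~ lt x y && ~~ lt y x && (x != y).

Definition free31 : Prop :=
  ~ exists a b c d, [/\ lt a b, lt b c, incomp d a, incomp d b & incomp d c].

Definition down (a : T) : {set T} := [set x | lt x a].
Definition up (a : T) : {set T} := [set x | lt a x].

Definition topr : rel T := fun a b =>
  ~~ (down a \subset down b) && ~~ (down b \subset down a).
Definition botr : rel T := fun a b =>
  ~~ (up a \subset up b) && ~~ (up b \subset up a).

Definition component (e : rel T) (x : T) : {set T} := [set y | connect e x y].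

Definition is_top (A : {set T}) : Prop :=
  1 < #|A| /\ exists x, A = component topr x.
Definition is_bottom (B : {set T}) : Prop :=
  1 < #|B| /\ exists x, B = component botr x.

(* induced (2+2) with top vertices in A and bottom vertices in B *)
Definition matched (A B : {set T}) : Prop :=
  exists a1 a2 b1 b2,
    [/\ a1 \in A, a2 \in A, b1 \in B, b2 \in B &
     [/\ a1 != a2, b1 != b2, lt b1 a1, lt b2 a2 &
      [/\ incomp a1 a2, incomp b1 b2, incomp b1 a2 & incomp b2 a1]]].
End Poset.

From mathcomp Require Import all_boot.
Set Implicit Arguments. Unset Strict Implicit. Unset Printing Implicit Defensive.

(* If a ⊤ b, then every x in D_a \ D_b and every y in D_b \ D_a satisfy
   x ⊥ y (a lies above x but not y, b above y but not x), so the symmetric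
   difference D_a Δ D_b lies in a single ⊥-component.  Walking along ⊤-edges,
   consecutive symmetric differences stay in the same ⊥-component, so a whole
   top A determines one bottom B; the two sides of any ⊤-edge of A give an
   induced (2+2) into B, and any (2+2) matching A to a bottom B' puts a point
   of such a symmetric difference into B', forcing B' = B.  The dual statement
   follows by reversing the order. *)

Section TopToBottom.
Variables (T : finType) (lt : rel T).
Hypothesis lt_trans : forall x y z, lt x y -> lt y z -> lt x z.

Definition down_sdiff (a b x : T) : bool := lt x a (+) lt x b.

Definition bottom_witness (u x : T) : Prop :=
  exists2 v, topr lt u v & down_sdiff u v x.

Lemma toprC : symmetric (topr lt).
Proof. by move=> a b; rewrite /topr andbC. Qed.

Lemma botrC : symmetric (botr lt).
Proof. by move=> a b; rewrite /botr andbC. Qed.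

Lemma down_sdiffC a b : down_sdiff a b =1 down_sdiff b a.
Proof. by move=> x; rewrite /down_sdiff addbC. Qed.

Lemma topr_down_diff a b : topr lt a b -> exists2 x, lt x a & ~~ lt x b.
Proof. by case/andP => /subsetPn [x]; rewrite !inE => xa xb _; exists x. Qed.

Lemma topr_down_sdiff a b : topr lt a b -> exists x, down_sdiff a b x.
Proof. by case/topr_down_diff => x xa xb; exists x; rewrite /down_sdiff xa. Qed.

Lemma botr_cross a b x y :
  lt x a -> ~~ lt x b -> lt y b -> ~~ lt y a -> botr lt x y.
Proof.
move=> xa xb yb ya; apply/andP; split; apply/subsetPn;
  [exists a | exists b]; by rewrite !inE.
Qed.

Lemma connect_down_sdiff a b x y : topr lt a b ->
  down_sdiff a b x -> down_sdiff a b y -> connect (botr lt) x y.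
Proof.
move=> tab.
have [p pa pb] := topr_down_diff tab.
have [q qb qa] := topr_down_diff (etrans (toprC b a) tab).
suff to_p w : down_sdiff a b w -> connect (botr lt) w p.
  move=> /to_p xp /to_p yp; apply: connect_trans xp _.
  by rewrite (sym_connect_sym botrC).
rewrite /down_sdiff; case wa: (lt w a); case wb: (lt w b) => //= _.
  apply: (connect_trans (y := q)); apply: connect1.
    by apply: (botr_cross (a := a) (b := b)); rewrite ?wa ?wb.
  exact: (botr_cross (a := b) (b := a)).
by apply: connect1; apply: (botr_cross (a := b) (b := a)); rewrite ?wa ?wb.
Qed.

(* The two symmetric differences at a common vertex b meet one ⊥-component:
   with p in D_b \ D_a and q in D_b \ D_c, either p or q lies in both
   differences, or else p < c and q < a, which makes p ⊥ q. *)
Lemma connect_down_sdiff_adj b a c x y : topr lt b a -> topr lt b c ->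
  down_sdiff b a x -> down_sdiff b c y -> connect (botr lt) x y.
Proof.
move=> tba tbc dx dy.
have [p pb pa] := topr_down_diff tba.
have [q qb qc] := topr_down_diff tbc.
have dpa : down_sdiff b a p by rewrite /down_sdiff pb (negbTE pa).
have dqc : down_sdiff b c q by rewrite /down_sdiff qb (negbTE qc).
have x_p := connect_down_sdiff tba dx dpa.
have q_y := connect_down_sdiff tbc dqc dy.
case pc: (lt p c).
  case qa: (lt q a).
    apply: connect_trans x_p (connect_trans _ q_y); apply: connect1.
    by apply: (botr_cross (a := c) (b := a)); rewrite ?pc ?qa.
  apply: connect_trans q_y; apply: connect_down_sdiff tba dx _.
  by rewrite /down_sdiff qb qa.
apply: connect_trans x_p _; apply: connect_down_sdiff tbc _ dy.
by rewrite /down_sdiff pb pc.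
Qed.

Lemma bottom_witness_connect u x y :
  bottom_witness u x -> bottom_witness u y -> connect (botr lt) x y.
Proof. by move=> [v tuv dx] [w tuw dy]; apply: connect_down_sdiff_adj tuw dx dy. Qed.

Lemma topr_common_witness u v :
  topr lt u v -> exists x, bottom_witness u x /\ bottom_witness v x.
Proof.
move=> tuv; have [x dx] := topr_down_sdiff tuv.
by exists x; split; [exists v | exists u; rewrite 1?toprC 1?down_sdiffC].
Qed.

Lemma connect_topr_witness u v x y : connect (topr lt) u v ->
  bottom_witness u x -> bottom_witness v y -> connect (botr lt) x y.
Proof.
case/connectP=> p; elim: p u x => [|z p IH] u x /= => [_ -> | /andP [tuz pz] ev].
  exact: bottom_witness_connect.
have [w [wu wz]] := topr_common_witness tuz.
move=> ux vy; apply: connect_trans (bottom_witness_connect ux wu) _.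
exact: IH pz ev wz vy.
Qed.

Lemma topr_incomp a b : topr lt a b -> incomp lt a b.
Proof.
have nlt c d : topr lt c d -> ~~ lt c d.
  case/topr_down_diff=> x xc xd; apply: contra xd; exact: lt_trans.
move=> tab; rewrite /incomp nlt // nlt 1?toprC //=.
by apply: contraTneq tab => ->; rewrite /topr subxx.
Qed.

Lemma matched_of_topr (A B : {set T}) a b x y :
  a \in A -> b \in A -> x \in B -> y \in B -> topr lt a b ->
  lt x a -> ~~ lt x b -> lt y b -> ~~ lt y a -> matched lt A B.
Proof.
move=> aA bA xB yB tab xa xb yb ya.
have iab := topr_incomp tab.
have /andP [/andP [nab nba] neq_ab] := iab.
exists a, b, x, y; split=> //; split=> //.
  by apply: contraNneq xb => ->.
split=> //.
- rewrite /incomp -andbA; apply/and3P; split.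
  + by apply: contra xb => /lt_trans; apply.
  + by apply: contra ya => /lt_trans; apply.
  + by apply: contraNneq xb => ->.
- rewrite /incomp xb /= andbC; apply/andP; split.
    by apply: contraTneq xa => ->.
  by apply: contra nba => /lt_trans; apply.
- rewrite /incomp ya /= andbC; apply/andP; split.
    by apply: contraTneq yb => ->.
  by apply: contra nab => /lt_trans; apply.
Qed.

Lemma matched_witness (A B : {set T}) : matched lt A B ->
  exists a x, [/\ a \in A, x \in B & bottom_witness a x].
Proof.
move=> [a1 [a2 [b1 [b2 [a1A _ b1B _ [_ _ b1a1 b2a2 [_ _ ib1a2 ib2a1]]]]]]].
have /andP [/andP [b1a2 _] _] := ib1a2.
have /andP [/andP [b2a1 _] _] := ib2a1.
exists a1, b1; split=> //; exists a2.
  by apply/andP; split; apply/subsetPn; [exists b1 | exists b2]; rewrite !inE.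
by rewrite /down_sdiff b1a1 (negbTE b1a2).
Qed.

Lemma top_has_topr_edge (A : {set T}) : is_top lt A ->
  exists2 u, A = component (topr lt) u & exists v, topr lt u v.
Proof.
case=> /card_gt1P [a [b [aA bA neq_ab]]] [u defA]; exists u => //.
have [w wA neq_uw] : exists2 w, w \in A & w != u.
  case: (eqVneq a u) => [eq_au | ]; last by exists a.
  by exists b; rewrite // -eq_au eq_sym.
move: wA; rewrite defA inE => /connectP [[|v p] /=].
  by move=> _ eq_wu; rewrite eq_wu eqxx in neq_uw.
by case/andP=> tuv _ _; exists v.
Qed.

Lemma top_matched_unique (A : {set T}) : is_top lt A ->
  exists B : {set T}, [/\ is_bottom lt B, matched lt A B &
    forall B', is_bottom lt B' -> matched lt A B' -> B' = B].
Proof.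
case/top_has_topr_edge=> u -> [v tuv].
have [x xu xv] := topr_down_diff tuv.
have [y yv yu] := topr_down_diff (etrans (toprC v u) tuv).
have bxy := botr_cross xu xv yv yu.
have wx : bottom_witness u x by exists v; rewrite // /down_sdiff xu.
exists (component (botr lt) x); split.
- split; last by exists x.
  apply/card_gt1P; exists x, y; rewrite !inE connect0 connect1 //; split=> //.
  by apply: contraNneq xv => ->.
- apply: (matched_of_topr (a := u) (b := v) (x := x) (y := y)) => //;
    by rewrite inE ?connect0 ?connect1.
- move=> _ [_ [c ->]] /matched_witness [a [z [ua cz wz]]].
  rewrite !inE in ua cz; have xz := connect_topr_witness ua wx wz.
  have botr_sym := sym_connect_sym botrC.
  apply/setP => w.
  by rewrite !inE (same_connect botr_sym cz) (same_connect botr_sym xz).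
Qed.
End TopToBottom.

Lemma matched_dual (T : finType) (lt : rel T) (A B : {set T}) :
  matched lt B A -> matched (fun x y => lt y x) A B.
Proof.
have incompC x y : incomp lt x y = incomp lt y x.
  by rewrite /incomp eq_sym [~~ lt x y && _]andbC.
have incomp_dual x y : incomp (fun u v => lt v u) x y = incomp lt y x.
  by rewrite /incomp eq_sym.
move=> [a1 [a2 [b1 [b2 [a1B a2B b1A b2A [na nb l1 l2 [i12 j12 i1 i2]]]]]]].
by exists b1, b2, a1, a2; split=> //; split=> //; split;
  rewrite incomp_dual // incompC.
Qed.

Theorem proposition2p7 (T : finType) (lt : rel T) :
  is_strict_order lt -> free31 lt ->
  (forall A : {set T}, is_top lt A ->
     exists B : {set T}, [/\ is_bottom lt B, matched lt A B &
       forall B', is_bottom lt B' -> matched lt A B' -> B' = B]) /\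
  (forall B : {set T}, is_bottom lt B ->
     exists A : {set T}, [/\ is_top lt A, matched lt A B &
       forall A', is_top lt A' -> matched lt A' B -> A' = A]).
Proof.
case=> _ lt_trans _; split; first exact: top_matched_unique.
(* Reversing the order swaps D and U, so [is_bottom lt] is [is_top] of the
   reversed relation by conversion. *)
move=> B hB.
have gt_trans x y z : lt y x -> lt z y -> lt z x by move=> yx zy; exact: lt_trans zy yx.
have [A [hA mBA uniqA]] := top_matched_unique gt_trans hB.
exists A; split=> // [|A' hA' mA'B]; first exact: matched_dual mBA.
by apply: uniqA => //; exact: matched_dual.
Qed.
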